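(* Consider the following ten pairs of integer sequences $(\boldsymbol{a};\boldsymbol{b})$: $((2,2,1,1);(2,0,0,0,0))$, $((2,2,2);(2,1,0,0))$, $((2,2,2,1);(2,1,1,0,0))$, $((2,2,2,2);(3,1,0,0,0))$, $((2,2,2,2);(2,2,1,0,0))$, $((2,2,2,2);(2,1,1,1,1))$, $((3,2,2);(3,1,0,0))$, $((3,3);(3,1,0))$, $((3,3,2);(3,2,1,0))$, $((3,3,2);(4,0,0,0))$. For each such pair, with $\boldsymbol{a}=(a_1,\dots,a_s)$ and $\boldsymbol{b}=(b_1,\dots,b_{s+1})$, if there exists a minimal monad on $\mathbb{P}^3$ of the form $$\bigoplus_{i=1}^{s}\mathcal{O}(-a_i-1)\xrightarrow{\alpha}\bigoplus_{j=1}^{s+1}\big(\mathcal{O}(b_j)\oplus\mathcal{O}(-b_j-1)\big)\xrightarrow{\beta}\bigoplus_{i=1}^{s}\mathcal{O}(a_i)$$ whose cohomology is a rank $2$ vector bundle, then this cohomology is not a stable bundle.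
   Context: Work on $\mathbb{P}^3$ over an algebraically closed field; $\mathcal{O}=\mathcal{O}_{\mathbb{P}^3}$. A monad is a complex $\mathcal{C}\xrightarrow{\alpha}\mathcal{B}\xrightarrow{\beta}\mathcal{A}$ of vector bundles with $\alpha$ injective and $\beta$ surjective, with cohomology $\ker\beta/\operatorname{Im}\alpha$; it is minimal if no entry of the matrices of $\alpha,\beta$ (homogeneous forms) is a nonzero constant. A rank 2 bundle with $c_1=-1$ (which is the first Chern class of the cohomology of any such monad) is stable iff it has no nonzero global sections. *)

From HB Require Import structures.
From mathcomp Require Import all_boot all_order all_algebra.
From mathcomp Require Import mpoly.
Set Implicit Arguments. Unset Strict Implicit. Unset Printing Implicit Defensive.
Import Order.TTheory GRing.Theory Num.Theory.
Local Open Scope ring_scope.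

(* Homogeneous coordinate ring of P^3 over k. *)
Notation S k := {mpoly k[4]}.

(* Global sections of O(d) on P^3: homogeneous forms of degree d
   (only 0 when d < 0).  Hom(O(c),O(d)) = H^0(O(d-c)). *)
Definition sec (k : fieldType) (d : int) (p : S k) : bool :=
  if (0 <= d)%R then p \is (absz d).-homog else p == 0.

(* A morphism  (+)_{i<m} O(c i) --> (+)_{j<n} O(d j), given by an n x m
   matrix of homogeneous forms with entry (j,i) of degree d j - c i. *)
Definition split_hom (k : fieldType) (m n : nat) (c : 'I_m -> int)
  (d : 'I_n -> int) (M : 'M[S k]_(n, m)) : Prop :=
  forall i j, sec (d j - c i) (M j i).

(* The fibre of such a morphism at the point [x0:x1:x2:x3] of P^3
   (x a nonzero vector of k^4). *)
Definition fibre (k : fieldType) (m n : nat) (x : 'rV[k]_4)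
  (M : 'M[S k]_(n, m)) : 'M[k]_(n, m) :=
  map_mx (meval (fun i => x ord0 i)) M.

Definition minimal_mx (k : fieldType) (m n : nat) (M : 'M[S k]_(n, m)) : Prop :=
  forall i j (e : k), M j i = e%:MP -> e = 0.

(* A minimal monad  C --alpha--> B --beta--> A  with split terms
   C = (+)O(c i), B = (+)O(b j), A = (+)O(a l), whose cohomology is a vector
   bundle: beta o alpha = 0, beta surjective on every fibre, alpha injective
   on every fibre (the cohomology ker beta / im alpha is then a vector bundle
   of rank nb - nc - na). *)
Definition minimal_monad (k : fieldType) (nc nb na : nat)
  (c : 'I_nc -> int) (b : 'I_nb -> int) (a : 'I_na -> int)
  (alpha : 'M[S k]_(nb, nc)) (beta : 'M[S k]_(na, nb)) : Prop :=
  [/\ split_hom c b alpha, split_hom b a beta & beta *m alpha = 0] /\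
  [/\ forall x : 'rV[k]_4, x != 0 -> \rank (fibre x alpha) = nc,
      forall x : 'rV[k]_4, x != 0 -> \rank (fibre x beta) = na,
      minimal_mx alpha & minimal_mx beta].

(* The cohomology E = ker beta / im alpha has a nonzero global section:
   H^0(E) = ker H^0(beta) / im H^0(alpha) (using H^1(C) = 0 on P^3 and the
   left exactness of H^0), i.e. there is a global section v of B killed by
   beta which is not the image under alpha of a global section of C. *)
Definition cohomology_has_section (k : fieldType) (nc nb na : nat)
  (c : 'I_nc -> int) (b : 'I_nb -> int)
  (alpha : 'M[S k]_(nb, nc)) (beta : 'M[S k]_(na, nb)) : Prop :=
  exists v : 'cV[S k]_nb,
    [/\ forall j, sec (b j) (v j ord0), beta *m v = 0 &
        ~ exists w : 'cV[S k]_nc,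
            (forall i, sec (c i) (w i ord0)) /\ v = alpha *m w].

(* Stability of the rank 2 cohomology bundle (c_1 = -1): no nonzero
   global sections. *)
Definition cohomology_stable (k : fieldType) (nc nb na : nat)
  (c : 'I_nc -> int) (b : 'I_nb -> int)
  (alpha : 'M[S k]_(nb, nc)) (beta : 'M[S k]_(na, nb)) : Prop :=
  ~ cohomology_has_section c b alpha beta.

(* Degrees of the monad attached to (a; b), a = (a_1..a_s), b = (b_1..b_{s+1}):
   C = (+) O(-a_i-1),  B = (+) O(b_j) (+) (+) O(-b_j-1),  A = (+) O(a_i). *)
Definition degC (a : seq nat) : 'I_(size a) -> int :=
  fun i => - (nth 0%N a i)%:Z - 1.
Definition degA (a : seq nat) : 'I_(size a) -> int :=
  fun i => (nth 0%N a i)%:Z.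
Definition degB (b : seq nat) : 'I_(size b + size b) -> int :=
  fun j => if (j < size b)%N then (nth 0%N b j)%:Z
           else - (nth 0%N b (j - size b))%:Z - 1.

Definition ten_pairs : seq (seq nat * seq nat) :=
  [:: ([:: 2; 2; 1; 1], [:: 2; 0; 0; 0; 0]);
      ([:: 2; 2; 2], [:: 2; 1; 0; 0]);
      ([:: 2; 2; 2; 1], [:: 2; 1; 1; 0; 0]);
      ([:: 2; 2; 2; 2], [:: 3; 1; 0; 0; 0]);
      ([:: 2; 2; 2; 2], [:: 2; 2; 1; 0; 0]);
      ([:: 2; 2; 2; 2], [:: 2; 1; 1; 1; 1]);
      ([:: 3; 2; 2], [:: 3; 1; 0; 0]);
      ([:: 3; 3], [:: 3; 1; 0]);
      ([:: 3; 3; 2], [:: 3; 2; 1; 0]);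
      ([:: 3; 3; 2], [:: 4; 0; 0; 0])]%N.
Arguments degC a : clear implicits.
Arguments degA a : clear implicits.
Arguments degB b : clear implicits.

(* The summand O(b_1) of the middle term dominates the target A = (+) O(a_i),
   since b_1 >= a_i for every listed pair.  The entries of beta on that summand
   are forms of degree a_i - b_1 <= 0, i.e. constants, and minimality forces
   them to vanish.  Hence every section of O(b_1), e.g. x0^b_1, is killed by
   beta; it is not in the image of H^0(alpha) because H^0(C) = 0, all twists
   of C being negative.  So the cohomology bundle has a nonzero section. *)
From HB Require Import structures.
From mathcomp Require Import all_boot all_order all_algebra.
From mathcomp Require Import mpoly.
From mathcomp Require Import zify.
Set Implicit Arguments. Unset Strict Implicit. Unset Printing Implicit Defensive.
Local Open Scope ring_scope.
Import Order.TTheory GRing.Theory Num.Theory.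

Lemma dhomog0_mpolyC (k : fieldType) (n : nat) (p : {mpoly k[n]}) :
  p \is 0.-homog -> p = (p@_0)%:MP.
Proof.
move=> hp; apply/mpolyP => m; rewrite mcoeffC.
have [->|nz_m] := eqVneq m 0%MM; first by rewrite mulr1.
by rewrite mulr0; apply: (dhomog_nemf_coeff hp); rewrite mdeg_eq0.
Qed.

Lemma sec_neg (k : fieldType) (d : int) (p : S k) : d < 0 -> sec d p = (p == 0).
Proof. by rewrite /sec ltNge => /negbTE ->. Qed.

Lemma sec_Xn (k : fieldType) (n : nat) :
  sec n%:Z ('X_[(U_(@ord0 3) *+ n)%MM] : S k).
Proof.
have mdeg_Xn : mdeg (U_(@ord0 3) *+ n)%MM = n by rewrite mdegMn mdeg1 mul1n.
by rewrite /sec lez_nat dhomogX; apply/eqP; exact: mdeg_Xn.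
Qed.

Lemma minimal_split_hom_nonpos_eq0 (k : fieldType) (m n : nat)
    (c : 'I_m -> int) (d : 'I_n -> int) (M : 'M[S k]_(n, m)) i j :
  split_hom c d M -> minimal_mx M -> d j - c i <= 0 -> M j i = 0.
Proof.
move=> /(_ i j) secM minM; rewrite le_eqVlt => /orP[/eqP deg0 | deg_neg].
  by move: secM; rewrite /sec deg0 lexx => /dhomog0_mpolyC /[dup] /minM -> ->.
by move: secM; rewrite sec_neg // => /eqP.
Qed.

Lemma sections_of_negative_split_eq0 (k : fieldType) (n : nat)
    (c : 'I_n -> int) (w : 'cV[S k]_n) :
  (forall i, c i < 0) -> (forall i, sec (c i) (w i ord0)) -> w = 0.
Proof.
move=> c_neg secw; apply/matrixP => i z; rewrite (ord1 z) mxE.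
by apply/eqP; rewrite -(sec_neg _ (c_neg i)).
Qed.

Section DominantSummand.

Variables (k : fieldType) (nc nb na : nat).
Variables (c : 'I_nc -> int) (b : 'I_nb -> int) (a : 'I_na -> int).
Variables (alpha : 'M[S k]_(nb, nc)) (beta : 'M[S k]_(na, nb)).
Variables (j0 : 'I_nb) (d : nat).
Hypothesis b_j0 : b j0 = d%:Z.
Hypothesis a_le_b_j0 : forall l, a l <= d%:Z.
Hypothesis c_neg : forall i, c i < 0.

Lemma dominant_column_eq0 :
  split_hom b a beta -> minimal_mx beta -> forall l, beta l j0 = 0.
Proof.
move=> homb minb l; apply: minimal_split_hom_nonpos_eq0 homb minb _.
by rewrite b_j0 subr_le0.
Qed.

Lemma cohomology_has_section_of_dominant_summand :
  minimal_monad c b a alpha beta -> cohomology_has_section c b alpha beta.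
Proof.
case=> [[_ homb _] [_ _ _ minb]].
pose x0d_exp := (U_(@ord0 3) *+ d)%MM.
pose x0d : S k := 'X_[x0d_exp].
pose v : 'cV[S k]_nb := \col_j (if j == j0 then x0d else 0).
have v_j0 : v j0 ord0 = x0d by rewrite mxE eqxx.
exists v; split.
- move=> j; rewrite mxE; case: eqP => [->|_]; first by rewrite b_j0 sec_Xn.
  by rewrite /sec; case: ifP => _; [exact: dhomog0 | exact: eqxx].
- apply/matrixP => l z; rewrite (ord1 z) [RHS]mxE mxE (bigD1 j0) //= big1 ?addr0.
    by rewrite v_j0 (dominant_column_eq0 homb minb) mul0r.
  by move=> j /negbTE j_ne; rewrite mxE j_ne mulr0.
- case=> w [secw v_eq].
  move: v_eq; rewrite (sections_of_negative_split_eq0 c_neg secw) mulmx0.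
  move=> /matrixP /(_ j0 ord0); rewrite v_j0 mxE => /(congr1 (mcoeff x0d_exp)).
  by rewrite /x0d mcoeffX eqxx mcoeff0 => /eqP; rewrite oner_eq0.
Qed.

End DominantSummand.

Lemma degC_neg (a : seq nat) i : degC a i < 0.
Proof. rewrite /degC; lia. Qed.

Lemma degB_first (b : seq nat) (nz_b : (0 < size b)%N) :
  degB b (Ordinal (ltn_addr (size b) nz_b)) = (nth 0 b 0)%:Z.
Proof. by rewrite /degB /= nz_b. Qed.

Lemma degA_le (a : seq nat) (d : nat) :
  all (fun x => x <= d)%N a -> forall l, degA a l <= d%:Z.
Proof. by move=> /allP a_le l; rewrite /degA lez_nat a_le ?mem_nth. Qed.

Lemma ten_pairs_dominant :
  all (fun p : seq nat * seq nat =>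
         (0 < size p.2)%N && all (fun x => x <= nth 0 p.2 0)%N p.1) ten_pairs.
Proof. by []. Qed.

Theorem proposition5 (k : closedFieldType) (a b : seq nat) :
  (a, b) \in ten_pairs ->
  forall (alpha : 'M[{mpoly k[4]}]_(size b + size b, size a))
         (beta : 'M[{mpoly k[4]}]_(size a, size b + size b)),
  minimal_monad (degC a) (degB b) (degA a) alpha beta ->
  ~ cohomology_stable (degC a) (degB b) alpha beta.
Proof.
move=> ab_in alpha beta monad; apply.
have /andP[nz_b a_le] := allP ten_pairs_dominant _ ab_in.
exact: (cohomology_has_section_of_dominant_summand (degB_first nz_b)
          (degA_le a_le) (@degC_neg a) monad).
Qed.
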